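(* Let $K\subset\mathbb{R}^d$ be a non-empty compact set, let $\rho\in(0,1)$, let $\mathcal{B}$ be an inner regular partition of $K$ with ratio $\rho$, and let $\mathcal{T}$ be the corresponding tree. Then $\dim_{\mathrm{L}}\partial\mathcal{T}\leq\dim_{\mathrm{L}} K$.
   Context: $B(x,r)$ is the closed ball; $N_r(F)$ is the minimal number of closed $r$-balls centred in $F$ covering $F$; $\dim_{\mathrm{L}} K=\sup\{s>0:\exists C>0\ \forall 0<r\leq R<1\ \forall x\in K,\ N_r(B(x,R)\cap K)\geq C(R/r)^s\}$. Inner regular partition: for $\rho\in(0,1)$, a family $\mathcal{B}=\{(Q_{i,k},x_{i,k}):k\in\mathbb{N}\cup\{0\},\ i\in\mathcal{N}_k\}$ of non-empty Borel sets $Q_{i,k}$ with distinguished points $x_{i,k}\in K\cap Q_{i,k}$ such that, for some constants $c,C>0$: (i) $\#\mathcal{N}_0=1$; (ii) for each $k$, $K$ is the disjoint union of $Q_{i,k}$, $i\in\mathcal{N}_k$; (iii) if $k\leq m$, $i\in\mathcal{N}_k$, $j\in\mathcal{N}_m$ then either $Q_{i,k}\cap Q_{j,m}=\varnothing$ or $Q_{j,m}\subset Q_{i,k}$; (iv) $B(x_{i,k},c\rho^k)\subset Q_{i,k}\subset B(x_{i,k},C\rho^k)$ for all $k,i$; (v) $\{x_{i,k}:i\in\mathcal{N}_k\}\subset\{x_{i,k+1}:i\in\mathcal{N}_{k+1}\}$. The number of children (sets of level $k+1$ contained in a given set of level $k$) is bounded by some $M\in\mathbb{N}$. Corresponding tree: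 with alphabet $\mathcal{A}=\{1,\ldots,M\}$, label the root set of level $0$ by the empty word, and inductively, if the set with label $\mathtt{a}\in\mathcal{A}^k$ has children $R_1,\ldots,R_j$ ($j\leq M$), label $R_i$ by $\mathtt{a}i$. $\mathcal{T}$ is the set of all labels, $\mathcal{T}_n$ the labels of length $n$. For a word $\mathtt{a}$ of length $n$, $[\mathtt{a}]$ is the set of infinite sequences in $\mathcal{A}^{\mathbb{N}}$ beginning with $\mathtt{a}$, and $\partial\mathcal{T}=\bigcap_n\bigcup_{\mathtt{a}\in\mathcal{T}_n}[\mathtt{a}]$. The lower dimension of $\partial\mathcal{T}$ is defined as $\dim_{\mathrm{L}}\partial\mathcal{T}=\sup\{s>0:\exists C>0\ \forall 0\leq m\leq k\ \forall\mathtt{a}\in\mathcal{T}_m,\ \#\{\mathtt{b}\in\mathcal{T}_k:[\mathtt{b}]\subset[\mathtt{a}]\}\geq C\rho^{(m-k)s}\}$. *)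

From HB Require Import structures.
From mathcomp Require Import all_boot all_order all_algebra.
From mathcomp Require Import finmap.
From mathcomp Require Import all_classical all_reals all_analysis.
Set Implicit Arguments. Unset Strict Implicit. Unset Printing Implicit Defensive.
Import Order.TTheory GRing.Theory Num.Theory.
Import numFieldNormedType.Exports.
Local Open Scope classical_set_scope.
Local Open Scope ring_scope.

Definition edist (R : realType) (d : nat) (x y : 'rV[R]_d) : R :=
  Num.sqrt (\sum_(i < d) (x ord0 i - y ord0 i) ^+ 2).

Definition cball (R : realType) (d : nat) (x : 'rV[R]_d) (r : R) : set 'rV[R]_d :=
  [set y | edist x y <= r].

Definition cover_counts (R : realType) (d : nat) (F : set 'rV[R]_d) (r : R) : set nat :=
  [set n | exists s : seq 'rV[R]_d, size s = n /\ (forall c, c \in s -> F c) /\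
      F `<=` [set y | exists2 c, c \in s & cball c r y]].

(* N_r(F): minimal number of closed r-balls centred in F covering F (+oo if none) *)
Definition Ncov (R : realType) (d : nat) (F : set 'rV[R]_d) (r : R) : \bar R :=
  ereal_inf [set ((n%:R : R)%:E) | n in cover_counts F r].

(* lower dimension of K (sup of the empty set is -oo) *)
Definition lower_dim (R : realType) (d : nat) (K : set 'rV[R]_d) : \bar R :=
  ereal_sup [set s%:E | s in [set s : R | 0 < s /\ exists C : R, 0 < C /\
     forall r Rr : R, 0 < r -> r <= Rr -> Rr < 1 -> forall x, K x ->
       ((C * (Rr / r) `^ s)%:E <= Ncov (cball x Rr `&` K) r)%E]].

Definition borel_set (R : realType) (d : nat) (A : set 'rV[R]_d) : Prop :=
  <<s open >> A.

(* inner regular partition of K with ratio rho: index sets N k (subsets of an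
   index type I), sets Q k i, distinguished points x k i *)
Definition inner_regular_partition (R : realType) (d : nat) (K : set 'rV[R]_d)
  (rho : R) (I : Type) (N : nat -> set I) (Q : nat -> I -> set 'rV[R]_d)
  (x : nat -> I -> 'rV[R]_d) : Prop :=
  exists c C : R, 0 < c /\ 0 < C /\
  (forall k i, N k i -> Q k i !=set0 /\ borel_set (Q k i) /\ K (x k i) /\ Q k i (x k i)) /\
  (exists i0, N 0%N = [set i0]) /\
  (forall k, K = \bigcup_(i in N k) Q k i /\
               forall i j, N k i -> N k j -> i <> j -> Q k i `&` Q k j = set0) /\
  (forall k m i j, (k <= m)%N -> N k i -> N m j ->
               Q k i `&` Q m j = set0 \/ Q m j `<=` Q k i) /\
  (* (iv) balls are balls of the metric space K *)
  (forall k i, N k i -> cball (x k i) (c * rho ^+ k) `&` K `<=` Q k i /\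
                         Q k i `<=` cball (x k i) (C * rho ^+ k) `&` K) /\
  (forall k i, N k i -> exists j, N k.+1 j /\ x k.+1 j = x k i).

(* A labelling of the partition by words over the alphabet 'I_M (letter a
   stands for a+1 in {1,...,M}) following the construction of the
   corresponding tree. *)
Definition tree_labeling (R : realType) (d : nat) (I : Type) (M : nat)
  (N : nat -> set I) (Q : nat -> I -> set 'rV[R]_d) (lab : nat -> I -> seq 'I_M) : Prop :=
  (forall i, N 0%N i -> lab 0%N i = [::]) /\
  (forall k i j, N k i -> N k.+1 j -> Q k.+1 j `<=` Q k i ->
     exists a, lab k.+1 j = rcons (lab k i) a) /\
  (forall k i j, N k i -> N k j -> lab k i = lab k j -> i = j) /\
  (forall k i (a : 'I_M), N k i ->
     (exists j, N k.+1 j /\ lab k.+1 j = rcons (lab k i) a) ->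
     forall b : 'I_M, (b <= a)%N ->
       exists j, N k.+1 j /\ lab k.+1 j = rcons (lab k i) b).

Definition tree_level (I : Type) (M : nat) (N : nat -> set I)
  (lab : nat -> I -> seq 'I_M) (n : nat) : set (seq 'I_M) := lab n @` N n.

Definition cyl (M : nat) (a : seq 'I_M) : set (nat -> 'I_M) :=
  [set w | [seq w i | i <- iota 0 (size a)] = a].

Definition tree_boundary (M : nat) (T : nat -> set (seq 'I_M)) : set (nat -> 'I_M) :=
  \bigcap_(n in [set: nat]) \bigcup_(a in T n) cyl a.

Definition descendants (M : nat) (T : nat -> set (seq 'I_M)) (k : nat) (a : seq 'I_M)
  : set (seq 'I_M) := [set b | T k b /\ cyl b `<=` cyl a].

Definition tree_lower_dim (R : realType) (M : nat) (rho : R)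
  (T : nat -> set (seq 'I_M)) : \bar R :=
  ereal_sup [set s%:E | s in [set s : R | 0 < s /\ exists C : R, 0 < C /\
     forall m k : nat, (m <= k)%N -> forall a, T m a ->
       C * rho `^ ((m%:R - k%:R) * s) <=
       (#|` fset_set (descendants T k a)|%fset)%:R]].

(* Fix y in K and scales 0 < r <= R < 1.  Let Q be the cell of level m
   containing y, with m the first level whose cells have diameter at most R,
   so that rho^m is comparable to R; let k be the last level with
   2 r <= c rho^k, so that rho^k is comparable to r.  Two centres of level-k
   cells at distance at most 2 r would put one of them in the inner ball of
   the other's cell, contradicting disjointness; so an r-ball contains at most
   one centre of a level-k cell inside Q c B(y, R).  Hence any cover of
   B(y, R) by r-balls has at least as many balls as the label of Q has
   descendants of length k, which is at least C rho^((m - k) s), a multiple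
   of (R / r)^s.  If there is no such k >= m, then R / r is bounded and a
   single ball suffices. *)
From Pilot Require Import Defs.
From HB Require Import structures.
From mathcomp Require Import all_boot all_order all_algebra finmap.
From mathcomp Require Import all_classical all_reals all_analysis.
From mathcomp Require Import ring lra.
Import Order.TTheory GRing.Theory Num.Theory.
Import numFieldNormedType.Exports.
Set Implicit Arguments. Unset Strict Implicit.
Local Open Scope classical_set_scope.
Local Open Scope ring_scope.

Lemma exists_first_expr_le (R : realType) (rho t : R) : 0 < rho < 1 -> 0 < t ->
  exists n, rho ^+ n <= t /\ forall k, (k < n)%N -> t < rho ^+ k.
Proof.
move=> /andP[rho0 rho1] t0.
have [n0 rn0] : exists n, rho ^+ n <= t.
  have rho_abs : `|rho| < 1 by rewrite gtr0_norm.
  exact: filter_ex (cvgr_le 0 (cvg_expr rho_abs) t t0).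
have [n rn nmin] := ex_minnP (ex_intro (fun n => rho ^+ n <= t) n0 rn0).
exists n; split => // k kn; rewrite ltNge; apply/negP => /nmin.
by rewrite leqNgt kn.
Qed.

Lemma powR_expr_ratio (R : realType) (rho s : R) (m k : nat) : 0 < rho ->
  rho `^ ((m%:R - k%:R) * s) = (rho ^+ m / rho ^+ k) `^ s.
Proof.
move=> rho0; rewrite powRrM powRB ?(gt_eqF rho0) ?implybT //.
by rewrite !powR_mulrn ?ltW.
Qed.

Lemma edist_sqr (R : realType) d (x y : 'rV[R]_d) :
  Defs.edist x y ^+ 2 = \sum_(i < d) (x ord0 i - y ord0 i) ^+ 2.
Proof. by rewrite /Defs.edist sqr_sqrtr // sumr_ge0 // => i _; apply: sqr_ge0. Qed.

Lemma cball_center (R : realType) d (x : 'rV[R]_d) (r : R) : 0 <= r -> cball x r x.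
Proof. by move=> r0; rewrite /cball /Defs.edist /= big1 ?sqrtr0 // => i _; rewrite subrr expr0n. Qed.

Lemma cball_edist_le (R : realType) d (z x y : 'rV[R]_d) (r : R) :
  cball z r x -> cball z r y -> Defs.edist x y <= 2 * r.
Proof.
rewrite /cball /= => zx zy.
have r0 : 0 <= r by apply: le_trans zx; apply: sqrtr_ge0.
have sqr_le (w : 'rV[R]_d) : Defs.edist z w <= r -> Defs.edist z w ^+ 2 <= r ^+ 2.
  by move=> zw; rewrite ler_sqr ?nnegrE ?sqrtr_ge0.
rewrite -ler_sqr ?nnegrE ?sqrtr_ge0 ?mulr_ge0 //.
have := sqr_le _ zx; have := sqr_le _ zy; rewrite !edist_sqr => Sy Sx.
(* (u - v)^2 <= 2 (w - u)^2 + 2 (w - v)^2, coordinatewise *)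
apply: (@le_trans _ _ (2 * \sum_(i < d) (z ord0 i - x ord0 i) ^+ 2 +
                       2 * \sum_(i < d) (z ord0 i - y ord0 i) ^+ 2)); last by nra.
rewrite !mulr_sumr -big_split /=; apply: ler_sum => i _.
have := sqr_ge0 (2 * z ord0 i - x ord0 i - y ord0 i); nra.
Qed.

Lemma uniq_leq_size_rel (A B : eqType) (P : A -> B -> Prop) (s : seq A) (t : seq B) :
  uniq s -> (forall a, a \in s -> exists2 b, b \in t & P a b) ->
  (forall a a' b, a \in s -> a' \in s -> P a b -> P a' b -> a = a') ->
  (size s <= size t)%N.
Proof.
elim: s t => [//|a s IH] t /= /andP[a_s s_uniq] P_ex P_inj.
have in_cons a' : a' \in s -> a' \in a :: s by move=> a's; rewrite inE a's orbT.
have [b bt Pab] := P_ex a (mem_head _ _).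
rewrite (perm_size (perm_to_rem bt)) ltnS; apply: IH => // [a' a's|a1 a2 b' /in_cons + /in_cons].
- have [b' b't Pab'] := P_ex a' (in_cons _ a's).
  exists b' => //; have [eb|b'b] := eqVneq b' b; last by rewrite (rem_mem b'b).
  rewrite eb in Pab'; move: a_s.
  by rewrite -(P_inj a' a b (in_cons _ a's) (mem_head _ _) Pab' Pab) a's.
- exact: P_inj.
Qed.

Lemma mem_fset_set (T : choiceType) (D : set T) y : y \in fset_set D -> D y.
Proof.
have [Dfin|Dinf] := pselect (finite_set D); first by rewrite in_fset_set // inE.
by rewrite /fset_set; case: pselect => // Dfin; have := Dinf Dfin.
Qed.

Lemma cyl_sub_prefix (M : nat) (a b : seq 'I_M) :
  (size a <= size b)%N -> cyl b `<=` cyl a -> a = take (size a) b.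
Proof.
case: b => [|b0 b']; first by rewrite leqn0 => /nilP ->.
set b := b0 :: b' => ab /(_ (nth b0 b)).
have cyl_b : cyl b (nth b0 b).
  by rewrite -[cyl b _]/(map (nth b0 b) (iota 0 (size b)) = b) map_nth_iota0 // take_size.
move=> /(_ cyl_b); rewrite /cyl /= => <-.
apply: (@eq_from_nth _ b0); first by rewrite size_map size_iota size_take_min (minn_idPl ab).
move=> i; rewrite size_map size_iota => ia.
by rewrite (nth_map 0%N) ?size_iota // nth_iota // add0n nth_take.
Qed.

Section NestedPartitionLabels.
Variables (T I : Type) (K : set T) (N : nat -> set I) (Q : nat -> I -> set T).
Variables (M : nat) (lab : nat -> I -> seq 'I_M).
Hypothesis Q_neq0 : forall k i, N k i -> Q k i !=set0.
Hypothesis K_partition : forall k, K = \bigcup_(i in N k) Q k i.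
Hypothesis Q_nested : forall k m i j, (k <= m)%N -> N k i -> N m j ->
  Q k i `&` Q m j = set0 \/ Q m j `<=` Q k i.
Hypothesis lab_root : forall i, N 0%N i -> lab 0%N i = [::].
Hypothesis lab_child : forall k i j, N k i -> N k.+1 j -> Q k.+1 j `<=` Q k i ->
  exists a, lab k.+1 j = rcons (lab k i) a.
Hypothesis lab_inj : forall k i j, N k i -> N k j -> lab k i = lab k j -> i = j.

Lemma exists_parent k j : N k.+1 j -> exists2 i, N k i & Q k.+1 j `<=` Q k i.
Proof.
move=> Nj; have [y Qy] := Q_neq0 Nj.
have : K y by rewrite (K_partition k.+1); exists j.
rewrite (K_partition k) => -[i Ni Qiy]; exists i => //.
have [Q_disj|//] := Q_nested (leqnSn k) Ni Nj.
by have : (Q k i `&` Q k.+1 j) y by []; rewrite Q_disj.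
Qed.

Lemma size_lab k j : N k j -> size (lab k j) = k.
Proof.
elim: k j => [|k IH] j Nj; first by rewrite lab_root.
have [i Ni Qji] := exists_parent Nj; have [a ->] := lab_child Ni Nj Qji.
by rewrite size_rcons IH.
Qed.

Lemma exists_ancestor k j l : N k j -> (l <= k)%N ->
  exists i, [/\ N l i, Q k j `<=` Q l i & lab l i = take l (lab k j)].
Proof.
elim: k j => [|k IH] j Nj.
  by rewrite leqn0 => /eqP ->; exists j; split; rewrite ?take0 ?lab_root.
rewrite leq_eqVlt ltnS => /orP[/eqP ->|lk].
  by exists j; split; rewrite ?take_oversize ?size_lab.
have [p Np Qjp] := exists_parent Nj; have [a ->] := lab_child Np Nj Qjp.
have [i [Ni Qpi lab_i]] := IH p Np lk.
exists i; split => //; first exact: subset_trans Qjp Qpi.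
by rewrite lab_i -cats1 takel_cat // size_lab.
Qed.

Lemma descendants_lab m i k b : N m i -> (m <= k)%N ->
  descendants (tree_level N lab) k (lab m i) b ->
  exists2 j, N k j /\ lab k j = b & Q k j `<=` Q m i.
Proof.
move=> Ni mk [[j Nj <-] cyl_ji]; exists j => //.
have [i' [Ni' Qji' lab_i']] := exists_ancestor Nj mk.
suff <- : i' = i by [].
have sizes : (size (lab m i) <= size (lab k j))%N by rewrite !size_lab.
by apply: (lab_inj Ni' Ni); rewrite lab_i' (cyl_sub_prefix sizes cyl_ji) (size_lab Ni).
Qed.

End NestedPartitionLabels.

Section InnerRegularPartition.
Variables (R : realType) (d : nat) (K : set 'rV[R]_d) (rho c C : R).
Variables (I : Type) (N : nat -> set I) (Q : nat -> I -> set 'rV[R]_d).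
Variables (x : nat -> I -> 'rV[R]_d) (M : nat) (lab : nat -> I -> seq 'I_M).
Hypothesis rho01 : 0 < rho < 1.
Hypotheses (c_gt0 : 0 < c) (C_gt0 : 0 < C).
Hypothesis Q_center : forall k i, N k i -> Q k i (x k i).
Hypothesis K_partition : forall k, K = \bigcup_(i in N k) Q k i.
Hypothesis Q_disjoint : forall k i j, N k i -> N k j -> i <> j ->
  Q k i `&` Q k j = set0.
Hypothesis Q_nested : forall k m i j, (k <= m)%N -> N k i -> N m j ->
  Q k i `&` Q m j = set0 \/ Q m j `<=` Q k i.
Hypothesis Q_inner : forall k i, N k i -> cball (x k i) (c * rho ^+ k) `&` K `<=` Q k i.
Hypothesis Q_outer : forall k i, N k i -> Q k i `<=` cball (x k i) (C * rho ^+ k) `&` K.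
Hypothesis lab_root : forall i, N 0%N i -> lab 0%N i = [::].
Hypothesis lab_child : forall k i j, N k i -> N k.+1 j -> Q k.+1 j `<=` Q k i ->
  exists a, lab k.+1 j = rcons (lab k i) a.
Hypothesis lab_inj : forall k i j, N k i -> N k j -> lab k i = lab k j -> i = j.

Let C2 := Num.max 1 (2 * C).
Let gam := c * rho ^+ 2 / (2 * C2).

Lemma cell_sub_cball y r : K y -> 0 < r -> r <= 1 ->
  exists m i, [/\ N m i, Q m i `<=` cball y r `&` K & rho * r <= C2 * rho ^+ m].
Proof.
move=> Ky r0 r1; have /andP[rho0 rho1] := rho01.
have C2_gt0 : 0 < 2 * C by rewrite mulr_gt0.
have [m [rho_m m_first]] := exists_first_expr_le rho01 (divr_gt0 r0 C2_gt0).
have [i Ni Qiy] : exists2 i, N m i & Q m i y by rewrite (K_partition m) in Ky.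
exists m, i; split => //.
  move=> w Qiw; have [xw Kw] := Q_outer Ni Qiw; have [xy _] := Q_outer Ni Qiy.
  split => //; apply: le_trans (cball_edist_le xy xw) _.
  by rewrite mulrA mulrC -ler_pdivlMr.
have C2_ge1 : 1 <= C2 by rewrite le_max lexx.
have C2_ge2C : 2 * C <= C2 by rewrite le_max lexx orbT.
case: m rho_m m_first {Ni Qiy} => [|m] _ m_first.
  by rewrite expr0 mulr1; apply: le_trans C2_ge1; nra.
have := m_first m (ltnSn m); rewrite ltr_pdivrMr // => r_lt.
have rho_m_ge0 : 0 <= rho * rho ^+ m by rewrite -exprS exprn_ge0 // ltW.
rewrite exprS; apply: le_trans (ler_wpM2r rho_m_ge0 C2_ge2C); nra.
Qed.

Lemma centers_separated k j j' (z : 'rV[R]_d) r : N k j -> N k j' ->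
  2 * r <= c * rho ^+ k -> cball z r (x k j) -> cball z r (x k j') -> j = j'.
Proof.
move=> Nj Nj' rk zj zj'; apply: contrapT => jj'.
have Kj' : K (x k j') by have [] := Q_outer Nj' (Q_center Nj').
have Qjj' : Q k j (x k j').
  by apply: Q_inner => //; split => //; apply: le_trans (cball_edist_le zj zj') rk.
have : (Q k j `&` Q k j') (x k j') by split => //; apply: Q_center.
by rewrite Q_disjoint.
Qed.

Lemma card_descendants_le_cover m i k r (S : set 'rV[R]_d) (cov : seq 'rV[R]_d) :
  N m i -> (m <= k)%N -> 2 * r <= c * rho ^+ k -> Q m i `<=` S ->
  S `<=` [set y | exists2 z, z \in cov & cball z r y] ->
  (#|` fset_set (descendants (tree_level N lab) k (lab m i))| <= size cov)%N.
Proof.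
move=> Ni mk rk QS S_cov.
have Q_neq0 k' i' : N k' i' -> Q k' i' !=set0 by move=> /Q_center; exists (x k' i').
pose covers b z := exists2 j, N k j /\ lab k j = b & cball z r (x k j).
apply: (@uniq_leq_size_rel _ _ covers); first exact: fset_uniq.
  move=> b /mem_fset_set.
  case/(descendants_lab Q_neq0 K_partition Q_nested lab_root lab_child lab_inj Ni mk).
  move=> j [Nj lab_j] Qji; have [z zc zj] := S_cov _ (QS _ (Qji _ (Q_center Nj))).
  by exists z => //; exists j.
move=> b b' z _ _ [j [Nj <-] zj] [j' [Nj' <-] zj'].
by rewrite (centers_separated Nj Nj' rk zj zj').
Qed.

Lemma scale_ratio_le1 m n r Rr : 0 < r -> 0 < Rr -> (n <= m)%N ->
  rho * Rr <= C2 * rho ^+ m -> rho ^+ n <= 2 * r / c -> gam * (Rr / r) <= 1.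
Proof.
move=> r0 Rr0 nm rho_m rho_n; have /andP[rho0 rho1] := rho01.
have C2_gt0 : 0 < C2 by rewrite lt_max ltr01.
have c_rho_m : c * rho ^+ m <= 2 * r.
  by rewrite mulrC -ler_pdivlMr //; apply: le_trans rho_n; rewrite ler_wiXn2l // ltW.
have c_rho_Rr : c * (rho * Rr) <= 2 * C2 * r.
  have := ler_wpM2l (ltW c_gt0) rho_m; have := ler_wpM2l (ltW C2_gt0) c_rho_m; nra.
have c_rho_Rr_ge0 : 0 <= c * (rho * Rr) by rewrite ltW // !mulr_gt0.
have -> : gam * (Rr / r) = rho * (c * (rho * Rr)) / (2 * C2 * r).
  by rewrite /gam; field; rewrite !gt_eqF.
rewrite ler_pdivrMr ?mulr_gt0 // mul1r; nra.
Qed.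

Lemma scale_ratio_le m k r Rr : 0 < r -> 0 < Rr ->
  rho * Rr <= C2 * rho ^+ m -> rho ^+ k.+1 <= 2 * r / c ->
  gam * (Rr / r) <= rho ^+ m / rho ^+ k.
Proof.
move=> r0 Rr0 rho_m rho_k; have /andP[rho0 rho1] := rho01.
have C2_gt0 : 0 < C2 by rewrite lt_max ltr01.
rewrite ler_pdivlMr ?exprn_gt0 //.
have -> : gam * (Rr / r) * rho ^+ k = c * rho ^+ k.+1 * (rho * Rr) / (2 * C2 * r).
  by rewrite /gam [rho ^+ k.+1]exprS; field; rewrite !gt_eqF.
have c_rho_k : c * rho ^+ k.+1 <= 2 * r by rewrite mulrC -ler_pdivlMr.
have rho_Rr_ge0 : 0 <= rho * Rr by rewrite ltW // mulr_gt0.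
have := ler_wpM2r rho_Rr_ge0 c_rho_k.
have := ler_wpM2l (ltW (mulr_gt0 (ltr0Sn _ 1) r0)) rho_m.
rewrite ler_pdivrMr ?mulr_gt0 //; nra.
Qed.

Lemma lower_dim_constant_of_tree s C1 : 0 < s -> 0 < C1 ->
  (forall m k, (m <= k)%N -> forall a, tree_level N lab m a ->
     C1 * rho `^ ((m%:R - k%:R) * s) <=
     (#|` fset_set (descendants (tree_level N lab) k a)|%fset)%:R) ->
  exists2 C' : R, 0 < C' & forall r Rr : R, 0 < r -> r <= Rr -> Rr < 1 ->
    forall y (cov : seq 'rV[R]_d), K y ->
    cball y Rr `&` K `<=` [set z | exists2 w, w \in cov & cball w r z] ->
    C' * (Rr / r) `^ s <= (size cov)%:R.
Proof.
move=> s0 C1_gt0 tree_bound; have /andP[rho0 rho1] := rho01.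
have gam_gt0 : 0 < gam by rewrite divr_gt0 ?mulr_gt0 ?exprn_gt0 // lt_max ltr01.
have C1'_gt0 : 0 < Num.min C1 1 by rewrite lt_min C1_gt0 ltr01.
have min_le_C1 : Num.min C1 1 <= C1 by rewrite ge_min lexx.
have min_le1 : Num.min C1 1 <= 1 by rewrite ge_min lexx orbT.
exists (Num.min C1 1 * gam `^ s); first by rewrite mulr_gt0 // powR_gt0.
move=> r Rr r0 rRr Rr1 y cov Ky cover.
have Rr0 : 0 < Rr by apply: lt_le_trans rRr.
have Rr_r_gt0 : 0 < Rr / r by rewrite divr_gt0.
have ratio_ge0 : 0 <= gam * (Rr / r) by rewrite ltW // mulr_gt0.
have lower_le B : gam * (Rr / r) <= B ->
    Num.min C1 1 * gam `^ s * (Rr / r) `^ s <= Num.min C1 1 * B `^ s.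
  move=> ratio_le; rewrite -mulrA -powRM ?(ltW gam_gt0) ?(ltW Rr_r_gt0) //.
  apply: ler_wpM2l; first exact: ltW.
  by apply: ge0_ler_powR; rewrite ?nnegrE ?(ltW s0) ?(le_trans ratio_ge0).
have [m [i [Ni Q_sub rho_m]]] := cell_sub_cball Ky Rr0 (ltW Rr1).
have [n [rho_n n_first]] :=
  exists_first_expr_le rho01 (divr_gt0 (mulr_gt0 (ltr0Sn _ 1) r0) c_gt0).
case: (ltnP m n) => [mn|nm].
  set k := n.-1; have n_eq : n = k.+1 by rewrite prednK // (leq_ltn_trans _ mn).
  have mk : (m <= k)%N by rewrite -ltnS -n_eq.
  have rk : 2 * r <= c * rho ^+ k.
    by rewrite [c * _]mulrC -ler_pdivrMr //; apply/ltW/n_first; rewrite n_eq.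
  rewrite n_eq in rho_n.
  have := tree_bound m k mk (lab m i) (ex_intro2 _ _ i Ni erefl).
  rewrite powR_expr_ratio // => tree_le.
  apply: le_trans (lower_le _ (scale_ratio_le r0 Rr0 rho_m rho_n)) _.
  apply: le_trans (ler_wpM2r (powR_ge0 _ _) min_le_C1) _.
  apply: le_trans tree_le _; rewrite ler_nat.
  exact: card_descendants_le_cover Ni mk rk Q_sub cover.
have [w w_cov _] := cover y (conj (cball_center y (ltW Rr0)) Ky).
apply: le_trans (lower_le _ (scale_ratio_le1 r0 Rr0 nm rho_m rho_n)) _.
rewrite powR1 /= mulr1 (le_trans min_le1) // ler1n.
by case: (cov) w_cov.
Qed.

End InnerRegularPartition.

Theorem lemma3p5 (R : realType) (d : nat) (K : set 'rV[R]_d) (rho : R)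
  (I : Type) (N : nat -> set I) (Q : nat -> I -> set 'rV[R]_d)
  (x : nat -> I -> 'rV[R]_d) (M : nat) (lab : nat -> I -> seq 'I_M) :
  K !=set0 -> compact K -> 0 < rho < 1 ->
  inner_regular_partition K rho N Q x ->
  tree_labeling N Q lab ->
  (tree_lower_dim rho (tree_level N lab) <= lower_dim K)%E.
Proof.
move=> _ _ rho01 [c [C [c_gt0 [C_gt0 [Q_pt [_ [K_part [Q_nested [Q_balls _]]]]]]]]].
move=> [lab_root [lab_child [lab_inj _]]].
have Q_center k i : N k i -> Q k i (x k i) by move=> /Q_pt[_ [_ []]].
have K_partition k : K = \bigcup_(i in N k) Q k i by have [] := K_part k.
have Q_disjoint k i j : N k i -> N k j -> i <> j -> Q k i `&` Q k j = set0.
  by have [_] := K_part k; apply.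
have Q_inner k i : N k i -> cball (x k i) (c * rho ^+ k) `&` K `<=` Q k i.
  by move=> /Q_balls[].
have Q_outer k i : N k i -> Q k i `<=` cball (x k i) (C * rho ^+ k) `&` K.
  by move=> /Q_balls[].
apply: ge_ereal_sup => _ [s [s_gt0 [C1 [C1_gt0 tree_bound]]] <-].
have [C' C'_gt0 Ncov_ge] := lower_dim_constant_of_tree rho01 c_gt0 C_gt0 Q_center
  K_partition Q_disjoint Q_nested Q_inner Q_outer lab_root lab_child lab_inj
  s_gt0 C1_gt0 tree_bound.
apply: ereal_sup_ubound; exists s => //; split => //; exists C'; split => //.
move=> r Rr r0 rRr Rr1 y Ky; apply: le_ereal_inf_tmp => _ [_ [cov [<- [_ cover]]] <-].
by rewrite lee_fin; apply: Ncov_ge r0 rRr Rr1 _ _ Ky cover.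
Qed.
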